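(* Let $f:X\to Y$ be a morphism in $\mathcal A$. The following are equivalent: (1) $\overline f$ is a monomorphism in $\underline{\mathcal A}$; (2) for every morphism $p:T\to Y$ with $T\in\mathcal T$, if $Z$ is the pullback of $f$ and $p$ with projections $g:Z\to X$ and $h:Z\to T$, then $g$ factors through an object of $\mathcal T$. If moreover $\mathcal T$ is contravariantly finite in $\mathcal A$, then (1) and (2) are also equivalent to: (3) for some $\mathcal T$-precover $p_Y:T_Y\to Y$, the projection $g:Z\to X$ from the pullback $Z$ of $f$ and $p_Y$ factors through an object of $\mathcal T$; (4) in the left triangulated category $\underline{\mathcal A}$ there is a left triangle of the form $\Omega Y\to Z\xrightarrow{\overline 0}X\xrightarrow{\overline f}Y$.
   Context: $\mathcal A$ is an abelian category and $\mathcal T$ is a full additive subcategory of $\mathcal A$ closed under finite direct sums and direct summands. $\langle\mathcal T\rangle$ is the ideal of morphisms of $\mathcal A$ that factor through an object of $\mathcal T$; the stable category $\underline{\mathcal A}=\mathcal A/\langle\mathcal T\rangle$ has the same objects as $\mathcal A$ and $\underline{\mathcal A}(X,Y)=\mathcal A(X,Y)/\langle\mathcal T\rangle(X,Y)$; $\overline f$ denotes the class of $f$ in $\underline{\mathcal A}$. When $\mathcal T$ is contravariantly finite, $\underline{\mathcal A}$ carries the (Beligiannis–Marmaridis) left triangulated structure: the loop functor is $\Omega Y=\ker(p_Y)$ for a $\mathcal T$-precover $p_Y:T_Y\to Y$; for $f:X\to Y$ one forms the pullback $Z$ of $f$ and $p_Y$ with projections $g:Z\to X$, $h:Z\to T_Y$,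 and the morphism $\Omega Y\to Z$ induced by the inclusion $\ker(p_Y)\to T_Y$ and $0:\ker(p_Y)\to X$; the left triangles are the diagrams in $\underline{\mathcal A}$ isomorphic to $\Omega Y\to Z\xrightarrow{\overline g}X\xrightarrow{\overline f}Y$ obtained in this way. *)

From HB Require Import structures.
From mathcomp Require Import all_boot all_algebra.
Set Implicit Arguments. Unset Strict Implicit. Unset Printing Implicit Defensive.
Import GRing.Theory.
Local Open Scope ring_scope.

Record PreaddCat := {
  Ob :> Type;
  Mor : Ob -> Ob -> zmodType;
  comp : forall X Y Z : Ob, Mor Y Z -> Mor X Y -> Mor X Z;
  idm : forall X : Ob, Mor X X;
  compA : forall X Y Z W (f : Mor Z W) (g : Mor Y Z) (h : Mor X Y),
      comp f (comp g h) = comp (comp f g) h;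
  comp1m : forall X Y (f : Mor X Y), comp (idm Y) f = f;
  compm1 : forall X Y (f : Mor X Y), comp f (idm X) = f;
  compDl : forall X Y Z (f g : Mor Y Z) (h : Mor X Y),
      comp (f + g) h = comp f h + comp g h;
  compDr : forall X Y Z (f : Mor Y Z) (g h : Mor X Y),
      comp f (g + h) = comp f g + comp f h
}.
Arguments Mor {_}.
Arguments comp {_ X Y Z}.
Arguments idm {_}.

Section Defs.
Variable C : PreaddCat.

Definition is_mono (X Y : C) (f : Mor X Y) : Prop :=
  forall W (u v : Mor W X), comp f u = comp f v -> u = v.
Definition is_epi (X Y : C) (f : Mor X Y) : Prop :=
  forall W (u v : Mor Y W), comp u f = comp v f -> u = v.

Definition is_zero_obj (Z : C) : Prop :=
  (forall X (u v : Mor Z X), u = v) /\ (forall X (u v : Mor X Z), u = v).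

Definition is_biprod (X1 X2 S : C) (i1 : Mor X1 S) (i2 : Mor X2 S)
    (p1 : Mor S X1) (p2 : Mor S X2) : Prop :=
  [/\ comp p1 i1 = idm X1, comp p2 i2 = idm X2, comp p1 i2 = 0,
      comp p2 i1 = 0 & comp i1 p1 + comp i2 p2 = idm S].

Definition is_kernel (X Y K : C) (f : Mor X Y) (k : Mor K X) : Prop :=
  comp f k = 0 /\
  forall W (u : Mor W X), comp f u = 0 ->
    exists v : Mor W K, comp k v = u /\ forall v', comp k v' = u -> v' = v.

Definition is_cokernel (X Y Q : C) (f : Mor X Y) (c : Mor Y Q) : Prop :=
  comp c f = 0 /\
  forall W (u : Mor Y W), comp u f = 0 ->
    exists v : Mor Q W, comp v c = u /\ forall v', comp v' c = u -> v' = v.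

Definition is_abelian : Prop :=
  [/\ (exists Z : C, is_zero_obj Z),
      (forall X1 X2 : C, exists S i1 i2 p1 p2,
        @is_biprod X1 X2 S i1 i2 p1 p2),
      (forall (X Y : C) (f : Mor X Y), exists K (k : Mor K X), is_kernel f k),
      (forall (X Y : C) (f : Mor X Y), exists Q (c : Mor Y Q), is_cokernel f c)
    & ((forall (X Y : C) (f : Mor X Y), is_mono f ->
         exists W (g : Mor Y W), is_kernel g f) /\
       (forall (X Y : C) (f : Mor X Y), is_epi f ->
         exists W (g : Mor W X), is_cokernel g f))].

Definition is_pullback (X Y T Z : C) (f : Mor X Y) (p : Mor T Y)
    (g : Mor Z X) (h : Mor Z T) : Prop :=
  comp f g = comp p h /\
  forall W (a : Mor W X) (b : Mor W T), comp f a = comp p b ->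
    exists v : Mor W Z, (comp g v = a /\ comp h v = b) /\
      forall v', comp g v' = a /\ comp h v' = b -> v' = v.

Variable T : C -> Prop.

(** full additive subcategory closed under finite direct sums (including the
    empty one, i.e. containing a zero object) and under direct summands *)
Definition is_add_subcat : Prop :=
  [/\ (exists Z : C, is_zero_obj Z /\ T Z),
      (forall X1 X2 S i1 i2 p1 p2, @is_biprod X1 X2 S i1 i2 p1 p2 ->
          T X1 -> T X2 -> T S)
    & (forall X1 X2 S i1 i2 p1 p2, @is_biprod X1 X2 S i1 i2 p1 p2 ->
          T S -> T X1)].

Definition factors_T (X Y : C) (f : Mor X Y) : Prop :=
  exists (U : C) (a : Mor X U) (b : Mor U Y), T U /\ f = comp b a.

(** Equality in the stable category A / <T> *)
Definition st_eq (X Y : C) (u v : Mor X Y) : Prop := factors_T (u - v).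

Definition st_mono (X Y : C) (f : Mor X Y) : Prop :=
  forall W (u v : Mor W X), st_eq (comp f u) (comp f v) -> st_eq u v.

Definition st_iso (X Y : C) (f : Mor X Y) : Prop :=
  exists g : Mor Y X, st_eq (comp g f) (idm X) /\ st_eq (comp f g) (idm Y).

Definition is_precover (U Y : C) (p : Mor U Y) : Prop :=
  T U /\ forall (V : C) (q : Mor V Y), T V -> exists r : Mor V U, q = comp p r.

Definition contravariantly_finite : Prop :=
  forall Y : C, exists (U : C) (p : Mor U Y), is_precover p.

(** Choice data defining the Beligiannis-Marmaridis left triangulated
    structure: a T-precover p_Y : T_Y -> Y for each Y and a kernel
    Omega Y -> T_Y of it. *)
Record LTData := {
  TY : C -> C;
  pY : forall Y : C, Mor (TY Y) Y;
  pY_prec : forall Y : C, is_precover (pY Y);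
  Om : C -> C;
  iY : forall Y : C, Mor (Om Y) (TY Y);
  iY_ker : forall Y : C, is_kernel (pY Y) (iY Y)
}.

Variable D : LTData.

(** The diagram  Omega Y' --k--> Z' --g'--> X' --f'--> Y'  (over A) is the
    standard left triangle of f' : k is induced by the inclusion
    Omega Y' -> T_Y' and 0 : Omega Y' -> X'. *)
Definition std_triangle (X' Y' Z' : C) (f' : Mor X' Y') (g' : Mor Z' X')
    (h' : Mor Z' (TY D Y')) (k : Mor (Om D Y') Z') : Prop :=
  [/\ is_pullback f' (pY D Y') g' h', comp g' k = 0 & comp h' k = iY D Y'].

(** Left triangles: diagrams  Omega D0 --u--> B --v--> E --w--> D0  in the stable
    category isomorphic (as left triangles, the first component being
    Omega(gamma)) to a standard one.  Omega(gamma) is the map induced on the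
    kernels by a lift gt : T_D0 -> T_Y' of gamma o p_D0 through p_Y'. *)
Definition is_left_triangle (B E D0 : C) (u : Mor (Om D D0) B) (v : Mor B E)
    (w : Mor E D0) : Prop :=
  exists (X' Y' Z' : C) (f' : Mor X' Y') (g' : Mor Z' X') (h' : Mor Z' (TY D Y'))
         (k : Mor (Om D Y') Z'),
    std_triangle f' g' h' k /\
    exists (beta : Mor B Z') (alpha : Mor E X') (gamma : Mor D0 Y')
           (gt : Mor (TY D D0) (TY D Y')) (delta : Mor (Om D D0) (Om D Y')),
      [/\ st_iso beta, st_iso alpha, st_iso gamma,
          comp (pY D Y') gt = comp gamma (pY D D0) &
       [/\
          comp (iY D Y') delta = comp gt (iY D D0),
          st_eq (comp beta u) (comp k delta),
          st_eq (comp alpha v) (comp g' beta)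
        & st_eq (comp gamma w) (comp f' alpha)]].

End Defs.

From Pilot Require Import Defs.
From HB Require Import structures.
From mathcomp Require Import all_boot all_algebra.
Import GRing.Theory.
Set Implicit Arguments. Unset Strict Implicit.
Local Open Scope ring_scope.

(* Stably, [f u = f v] means that [f (u - v) = b a] with [b] leaving an object
   of T; the universal property of the pullback of [f] along [b] (or along a
   precover through which [b] factors) then makes [u - v] factor through the
   pullback leg [g].  Conversely [f g = p h] factors through T, so stable
   monicity forces [g] to be stably zero.  For (4), the second map of the
   standard left triangle of [f] is that pullback leg, and an isomorphism of
   left triangles transports stable monicity of the third map. *)

Local Notation cp := Defs.comp.

Section Preadditive.
Variable C : PreaddCat.

Lemma comp0l (X Y Z : C) (h : Mor X Y) : cp (0 : Mor Y Z) h = 0.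
Proof.
have H := compDl (0 : Mor Y Z) 0 h; rewrite addr0 in H.
by apply: (addrI (cp (0 : Mor Y Z) h)); rewrite -H addr0.
Qed.

Lemma comp0r (X Y Z : C) (f : Mor Y Z) : cp f (0 : Mor X Y) = 0.
Proof.
have H := compDr f (0 : Mor X Y) 0; rewrite addr0 in H.
by apply: (addrI (cp f (0 : Mor X Y))); rewrite -H addr0.
Qed.

Lemma compNl (X Y Z : C) (f : Mor Y Z) (h : Mor X Y) : cp (- f) h = - cp f h.
Proof. by apply/eqP; rewrite -subr_eq0 opprK -compDl addNr comp0l. Qed.

Lemma compNr (X Y Z : C) (f : Mor Y Z) (h : Mor X Y) : cp f (- h) = - cp f h.
Proof. by apply/eqP; rewrite -subr_eq0 opprK -compDr addNr comp0r. Qed.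

Lemma compBl (X Y Z : C) (f g : Mor Y Z) (h : Mor X Y) :
  cp (f - g) h = cp f h - cp g h.
Proof. by rewrite compDl compNl. Qed.

Lemma compBr (X Y Z : C) (f : Mor Y Z) (g h : Mor X Y) :
  cp f (g - h) = cp f g - cp f h.
Proof. by rewrite compDr compNr. Qed.

Lemma biprod_comp_inj_proj (X1 X2 S : C) (i1 : Mor X1 S) (i2 : Mor X2 S)
    (p1 : Mor S X1) (p2 : Mor S X2) (W : C) (a : Mor W X1) (b : Mor W X2) :
  is_biprod i1 i2 p1 p2 ->
  cp p1 (cp i1 a + cp i2 b) = a /\ cp p2 (cp i1 a + cp i2 b) = b.
Proof.
case=> e1 e2 e3 e4 _; rewrite !compDr !Defs.compA e1 e2 e3 e4 !comp0l !comp1m.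
by rewrite addr0 add0r.
Qed.

Lemma abelian_pullback (HA : is_abelian C) (X Y U : C)
    (f : Mor X Y) (p : Mor U Y) :
  exists Z (g : Mor Z X) (h : Mor Z U), is_pullback f p g h.
Proof.
case: HA => _ Hbiprod Hker _ _.
have [S [i1 [i2 [p1 [p2 Hb]]]]] := Hbiprod X U.
have [K [k [Hk0 Hk]]] := Hker _ _ (cp f p1 - cp p p2).
exists K, (cp p1 k), (cp p2 k); split.
  by apply: subr0_eq; rewrite !Defs.compA -compBl.
move=> W a b Hab.
have [Hp1 Hp2] := biprod_comp_inj_proj a b Hb.
have Hw : cp (cp f p1 - cp p p2) (cp i1 a + cp i2 b) = 0.
  by rewrite compBl -!Defs.compA Hp1 Hp2 Hab subrr.
have [v [Hv Hv_uniq]] := Hk _ _ Hw.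
exists v; split; first by rewrite -!Defs.compA Hv.
move=> v' [Hav' Hbv']; apply: Hv_uniq.
case: Hb => _ _ _ _ e5.
by rewrite -[cp k v']comp1m -e5 compDl -!Defs.compA (Defs.compA p1) (Defs.compA p2) Hav' Hbv'.
Qed.

End Preadditive.

Section StableCategory.
Variables (C : PreaddCat) (T : C -> Prop).
Hypotheses (HA : is_abelian C) (HT : is_add_subcat T).

Lemma factors_T0 (X Y : C) : factors_T T (0 : Mor X Y).
Proof.
case: HT => [[Z [_ TZ]] _ _].
by exists Z, 0, 0; split => //; rewrite comp0l.
Qed.

Lemma factors_TN (X Y : C) (u : Mor X Y) :
  factors_T T u -> factors_T T (- u).
Proof.
by case=> U [a [b [TU ->]]]; exists U, a, (- b); split => //; rewrite compNl.
Qed.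

(* The sum [b1 a1 + b2 a2] factors through the biproduct of the two objects. *)
Lemma factors_TD (X Y : C) (u v : Mor X Y) :
  factors_T T u -> factors_T T v -> factors_T T (u + v).
Proof.
case=> U1 [a1 [b1 [T1 ->]]] [U2 [a2 [b2 [T2 ->]]]].
case: HA => _ Hbiprod _ _ _; case: HT => _ Hsum _.
have [S [i1 [i2 [p1 [p2 Hb]]]]] := Hbiprod U1 U2.
exists S, (cp i1 a1 + cp i2 a2), (cp b1 p1 + cp b2 p2).
split; first exact: Hsum Hb T1 T2.
have [Ha1 Ha2] := biprod_comp_inj_proj a1 a2 Hb.
by rewrite compDl -!Defs.compA Ha1 Ha2.
Qed.

Lemma factors_T_compl (X Y Z : C) (h : Mor Y Z) (u : Mor X Y) :
  factors_T T u -> factors_T T (cp h u).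
Proof.
by case=> U [a [b [TU ->]]]; exists U, a, (cp h b); split => //; rewrite Defs.compA.
Qed.

Lemma factors_T_compr (X Y Z : C) (u : Mor X Y) (h : Mor Z X) :
  factors_T T u -> factors_T T (cp u h).
Proof.
by case=> U [a [b [TU ->]]]; exists U, (cp a h), b; split => //; rewrite Defs.compA.
Qed.

Lemma st_eq0 (X Y : C) (u : Mor X Y) : st_eq T u 0 <-> factors_T T u.
Proof. by rewrite /st_eq subr0. Qed.

Lemma st_eq_refl (X Y : C) (u : Mor X Y) : st_eq T u u.
Proof. by rewrite /st_eq subrr; apply: factors_T0. Qed.

Lemma st_eq_sym (X Y : C) (u v : Mor X Y) : st_eq T u v -> st_eq T v u.
Proof. by move=> H; rewrite /st_eq -opprB; apply: factors_TN. Qed.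

Lemma st_eq_trans (X Y : C) (u v w : Mor X Y) :
  st_eq T u v -> st_eq T v w -> st_eq T u w.
Proof.
move=> Huv Hvw; rewrite /st_eq -[u](subrK v) -addrA.
exact: factors_TD.
Qed.

Lemma st_eq_compl (X Y Z : C) (h : Mor Y Z) (u v : Mor X Y) :
  st_eq T u v -> st_eq T (cp h u) (cp h v).
Proof. by move=> H; rewrite /st_eq -compBr; apply: factors_T_compl. Qed.

Lemma st_eq_compr (X Y Z : C) (u v : Mor X Y) (h : Mor Z X) :
  st_eq T u v -> st_eq T (cp u h) (cp v h).
Proof. by move=> H; rewrite /st_eq -compBl; apply: factors_T_compr. Qed.

Lemma st_iso_idm (X : C) : st_iso T (idm X).
Proof. by exists (idm X); split; rewrite comp1m; apply: st_eq_refl. Qed.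

Lemma factors_T_of_st_iso_compr (X Y Z : C) (g : Mor Y Z) (beta : Mor X Y) :
  st_iso T beta -> factors_T T (cp g beta) -> factors_T T g.
Proof.
case=> beta' [_ Hbb'] Hg; apply/st_eq0.
apply: (@st_eq_trans _ _ _ (cp (cp g beta) beta')).
  by rewrite -Defs.compA -{1}(compm1 g); apply: st_eq_sym; apply: st_eq_compl.
by apply/st_eq0; apply: factors_T_compr.
Qed.

Lemma st_mono_transfer (X Y X' Y' : C) (f : Mor X Y) (f' : Mor X' Y')
    (alpha : Mor X X') (gamma : Mor Y Y') :
  st_mono T f' -> st_iso T alpha -> st_eq T (cp gamma f) (cp f' alpha) ->
  st_mono T f.
Proof.
move=> Hf' [alpha' [Haa' _]] Hsq W u1 u2 Hu.
have Hsq_u (u : Mor W X) : st_eq T (cp gamma (cp f u)) (cp f' (cp alpha u)).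
  by rewrite !Defs.compA; apply: st_eq_compr.
have Halpha_u : st_eq T (cp alpha u1) (cp alpha u2).
  apply: Hf'; apply: (st_eq_trans (st_eq_sym (Hsq_u u1))).
  by apply: (st_eq_trans _ (Hsq_u u2)); apply: st_eq_compl.
have Hret (u : Mor W X) : st_eq T u (cp alpha' (cp alpha u)).
  by rewrite Defs.compA -{1}(comp1m u); apply: st_eq_sym; apply: st_eq_compr.
apply: (st_eq_trans (Hret u1)); apply: (st_eq_trans _ (st_eq_sym (Hret u2))).
exact: st_eq_compl.
Qed.

Section Pullback.
Variables (X Y U Z : C) (f : Mor X Y) (p : Mor U Y) (g : Mor Z X) (h : Mor Z U).
Hypothesis Hpb : is_pullback f p g h.

Lemma factors_T_pullback_cone (W : C) (w : Mor W X) (c : Mor W U) :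
  factors_T T g -> cp f w = cp p c -> factors_T T w.
Proof.
case: Hpb => _ Huniv Hg Hwc.
have [v [[<- _] _]] := Huniv _ _ _ Hwc.
exact: factors_T_compr.
Qed.

Lemma st_mono_of_precover_pullback :
  is_precover T p -> factors_T T g -> st_mono T f.
Proof.
move=> [_ Hlift] Hg W u v [V [a [b [TV Hab]]]].
have [r Hr] := Hlift _ b TV.
apply: (factors_T_pullback_cone (c := cp r a)) => //.
by rewrite compBr Hab Hr Defs.compA.
Qed.

Lemma pullback_leg_factors_T : T U -> st_mono T f -> factors_T T g.
Proof.
case: Hpb => Hfg _ TU Hf; apply/st_eq0; apply: Hf.
by rewrite comp0r; apply/st_eq0; rewrite Hfg; exists U, h, p.
Qed.

End Pullback.

Lemma st_mono_iff_pullback_legs_factor (X Y : C) (f : Mor X Y) :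
  st_mono T f <->
    (forall (U : C) (p : Mor U Y), T U ->
       forall (Z : C) (g : Mor Z X) (h : Mor Z U),
         is_pullback f p g h -> factors_T T g).
Proof.
split=> [Hf U p TU Z g h Hpb | Hlegs W u v [V [a [b [TV Hab]]]]].
  exact: pullback_leg_factors_T Hpb TU Hf.
have [Z [g [h Hpb]]] := abelian_pullback HA f b.
apply: (factors_T_pullback_cone Hpb (c := a)); first exact: Hlegs Hpb.
by rewrite compBr.
Qed.

Section LeftTriangles.
Variable D : LTData T.

Lemma std_triangle_exists (X Y : C) (f : Mor X Y) :
  exists (Z : C) (g : Mor Z X) (h : Mor Z (TY D Y)) (k : Mor (Om D Y) Z),
    std_triangle f g h k.
Proof.
have [Z [g [h Hpb]]] := abelian_pullback HA f (pY D Y).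
have Hcone : cp f (0 : Mor (Om D Y) X) = cp (pY D Y) (iY D Y).
  by rewrite comp0r (proj1 (iY_ker D Y)).
have [k [[Hgk Hhk] _]] := proj2 Hpb _ _ _ Hcone.
by exists Z, g, h, k.
Qed.

Lemma std_triangle_is_left_triangle (X Y Z : C) (f : Mor X Y) (g : Mor Z X)
    (h : Mor Z (TY D Y)) (k : Mor (Om D Y) Z) :
  std_triangle f g h k -> is_left_triangle k g f.
Proof.
move=> Hstd; exists X, Y, Z, f, g, h, k; split => //.
exists (idm Z), (idm X), (idm Y), (idm (TY D Y)), (idm (Om D Y)).
split; try exact: st_iso_idm; first by rewrite comp1m compm1.
by split; rewrite ?compm1 ?comp1m //; apply: st_eq_refl.
Qed.

Lemma left_triangle_st_eq (B E D0 : C) (u : Mor (Om D D0) B) (v v' : Mor B E)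
    (w : Mor E D0) :
  st_eq T v v' -> is_left_triangle u v w -> is_left_triangle u v' w.
Proof.
move=> Hvv' [X' [Y' [Z' [f' [g' [h' [k [Hstd [beta [alpha [gamma
   [gt [delta [Hbeta Halpha Hgamma Hgt [Hdelta Hu Hv Hw]]]]]]]]]]]]]]].
exists X', Y', Z', f', g', h', k; split => //.
exists beta, alpha, gamma, gt, delta; split => //; split => //.
apply: st_eq_trans Hv; apply: st_eq_compl; exact: st_eq_sym.
Qed.

Lemma st_mono_of_left_triangle0 (X Y Z : C) (f : Mor X Y)
    (u : Mor (Om D Y) Z) :
  is_left_triangle u (0 : Mor Z X) f -> st_mono T f.
Proof.
move=> [X' [Y' [Z' [f' [g' [h' [k [[Hpb _ _] [beta [alpha [gamma
   [gt [delta [Hbeta Halpha _ _ [_ _ Hg'beta Hsq]]]]]]]]]]]]]]].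
have Hg' : factors_T T g'.
  apply: (factors_T_of_st_iso_compr Hbeta); apply/st_eq0; apply: st_eq_sym.
  by rewrite comp0r in Hg'beta.
apply: (st_mono_transfer _ Halpha Hsq).
exact: st_mono_of_precover_pullback Hpb (pY_prec D Y') Hg'.
Qed.

End LeftTriangles.

End StableCategory.

Theorem proposition2p1 (C : PreaddCat) (T : C -> Prop)
    (HA : is_abelian C) (HT : is_add_subcat T) (X Y : C) (f : Mor X Y) :
  (* (1) <-> (2) *)
  (st_mono T f <->
     (forall (U : C) (p : Mor U Y), T U ->
        forall (Z : C) (g : Mor Z X) (h : Mor Z U),
          is_pullback f p g h -> factors_T T g)) /\
  (* if T is contravariantly finite, with the left triangulated structure
     given by any choice D of precovers and their kernels: (1) <-> (3), (1) <-> (4) *)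
  (contravariantly_finite T ->
     (st_mono T f <->
        (exists (U : C) (p : Mor U Y), is_precover T p /\
           forall (Z : C) (g : Mor Z X) (h : Mor Z U),
             is_pullback f p g h -> factors_T T g)) /\
     (forall D : LTData T,
        st_mono T f <->
          (exists (Z : C) (u : Mor (Om D Y) Z),
             is_left_triangle u (0 : Mor Z X) f))).
Proof.
split; first exact: st_mono_iff_pullback_legs_factor.
move=> Hfin; split.
  split=> [Hf | [U [p [Hp Hlegs]]]].
    have [U [p Hp]] := Hfin Y; exists U, p; split => // Z g h Hpb.
    exact: pullback_leg_factors_T Hpb (proj1 Hp) Hf.
  have [Z [g [h Hpb]]] := abelian_pullback HA f p.
  exact: st_mono_of_precover_pullback Hpb Hp (Hlegs _ _ _ Hpb).
move=> D; split=> [Hf | [Z [u Htri]]]; last exact: (st_mono_of_left_triangle0 HA HT Htri).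
have [Z [g [h [k Hstd]]]] := std_triangle_exists HA D f.
exists Z, k; apply: (left_triangle_st_eq HA HT _ (std_triangle_is_left_triangle HT Hstd)).
case: Hstd => Hpb _ _; apply/st_eq0.
exact: (pullback_leg_factors_T Hpb (proj1 (pY_prec D Y)) Hf).
Qed.
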